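(* Let $\mathcal{SB}=\langle\mathcal{L},A,\to,\text{supp}\rangle$ be an SBAF and $S\subseteq Sent(A)$ a compatible set of sentences. Then for every $i\in\mathbb{N}$, $R^S_i(Init(S))\subseteq R^S_{i+1}(Init(S))$ and $R^S_{i+1}(Init(S))$ is admissible.
   Context: A language is a triple $\mathcal{L}=\langle L,\overline{\cdot},n\rangle$: $L$ is a nonempty set of sentences; $\overline{\cdot}$ assigns to each $s\in L$ a set $\overline{s}\subseteq L$ of sentences incompatible with $s$, and is symmetric; $n$ is a partial naming function assigning to an argument $a$ a sentence $n(a)\in L$ (if undefined, put $\overline{n(a)}:=\emptyset$), with $\overline{n(\langle\{t\},t\rangle)}=\emptyset$. An argument is a pair $a=\langle Prem(a),Conc(a)\rangle$ with $Prem(a)$ a nonempty finite subset of $L$ and $Conc(a)\in L$; $Sent(a):=Prem(a)\cup\{Conc(a)\}$, $Sent(E):=\bigcup_{a\in E}Sent(a)$. Argument $a$ attacks $b$ ($a\to b$) if $Conc(a)\in\overline{s}$ for some $s\in Sent(b)$ or $Conc(a)\in\overline{n(b)}$. An SBAF is $\langle\mathcal{L},A,\to,\text{supp}\rangle$ with $A$ a finite set of arguments. For $E\subseteq A$: $E$ defends $a\in A$ if for every $b\in A$ with $b\to a$ some element of $E$ attacks $b$; $E$ is conflict-free if no $a,b\in E$ with $a\to b$; admissible if conflict-free and defends all its elements. $S$ is compatible if no $s,t\in S$ with $s\in\overline t$. $Arg_s(S):=\{a\in A\mid Prem(a)\subseteq S\text{ and }\overline{n(a)}\cap S=\emptyset\}$;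 $R^S(E):=\{a\in A\mid a\in Arg_s(S)\text{ and }E\text{ defends }a\}$; $R^S_0(E):=E$, $R^S_{i+1}(E):=R^S(R^S_i(E))$. For compatible $S$, $Init(S)$ is the largest admissible subset of $\{a\in A\mid Sent(a)\subseteq S\text{ and }\overline{n(a)}\cap S=\emptyset\}$ (this exists and is unique). *)

From mathcomp Require Import all_boot finmap.
Set Implicit Arguments. Unset Strict Implicit. Unset Printing Implicit Defensive.
Local Open Scope fset_scope.

Definition Arg (T : choiceType) := ({fset T} * T)%type.
Definition Prem {T : choiceType} (a : Arg T) : {fset T} := a.1.
Definition Conc {T : choiceType} (a : Arg T) : T := a.2.
Definition Sent {T : choiceType} (a : Arg T) (t : T) : Prop :=
  t \in Prem a \/ t = Conc a.

(* A language: sentences are the elements of T (nonempty);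
   [contrary s t] means t ∈ overline(s); [name] is the partial naming function. *)
Record language (T : choiceType) := Language {
  L_nonempty : inhabited T;
  contrary : T -> T -> Prop;
  contrary_sym : forall s t, contrary s t -> contrary t s;
  name : Arg T -> option T;
  name_singleton : forall t u, name ([fset t], t) = Some u ->
                               forall v, ~ contrary u v
}.

Definition namebar {T : choiceType} (Lg : language T) (a : Arg T) (t : T) : Prop :=
  match name Lg a with Some u => contrary Lg u t | None => False end.

(* An SBAF: language, finite set of arguments (with nonempty premises),
   attack relation induced by the language (see [attacks]), support relation. *)
Record SBAF (T : choiceType) := MkSBAF {
  lang : language T;
  args : {fset Arg T};
  args_prem_nonempty : forall a, a \in args -> Prem a != fset0;
  supp : Arg T -> Arg T -> Prop
}.

Section Defs.
Context {T : choiceType} (SB : SBAF T).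
Let Lg := lang SB.
Let A := args SB.

Definition attacks (a b : Arg T) : Prop :=
  (exists s, Sent b s /\ contrary Lg s (Conc a)) \/ namebar Lg b (Conc a).

Definition defends (E : Arg T -> Prop) (a : Arg T) : Prop :=
  forall b, b \in A -> attacks b a -> exists c, E c /\ attacks c b.
Definition conflict_free (E : Arg T -> Prop) : Prop :=
  forall a b, E a -> E b -> ~ attacks a b.
Definition admissible (E : Arg T -> Prop) : Prop :=
  conflict_free E /\ forall a, E a -> defends E a.

Definition compatible (S : T -> Prop) : Prop :=
  forall s t, S s -> S t -> ~ contrary Lg t s.

Definition SentA (t : T) : Prop := exists2 a, a \in A & Sent a t.

Definition Arg_s (S : T -> Prop) (a : Arg T) : Prop :=
  a \in A /\ (forall p, p \in Prem a -> S p) /\ (forall t, namebar Lg a t -> ~ S t).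

Definition RS (S : T -> Prop) (E : Arg T -> Prop) : Arg T -> Prop :=
  fun a => Arg_s S a /\ defends E a.

Definition RSi (S : T -> Prop) (i : nat) (E : Arg T -> Prop) : Arg T -> Prop :=
  iter i (RS S) E.

Definition init_cand (S : T -> Prop) (a : Arg T) : Prop :=
  a \in A /\ (forall t, Sent a t -> S t) /\ (forall t, namebar Lg a t -> ~ S t).

(* Init(S): the largest admissible subset of init_cand S, realised as the
   union of all admissible subsets of it (which is the largest one whenever
   a largest one exists, as asserted in the paper for compatible S). *)
Definition Init (S : T -> Prop) : Arg T -> Prop :=
  fun a => exists E, [/\ admissible E, (forall b, E b -> init_cand S b) & E a].

End Defs.

(* R^S is monotone in E. If E ⊆ A is conflict-free with E ⊆ R^S(E), then so is
   R^S(E): two members of R^S(E) in conflict would, through the defence E gives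
   each of them, produce a conflict inside E. Init(S) is such a set (its
   conflict-freeness comes from the compatibility of S), so the iterates are
   increasing, and each R^S(E) is admissible since it defends all E defends. *)
From mathcomp Require Import all_boot finmap.

Set Implicit Arguments. Unset Strict Implicit.

Section RSIteration.
Variables (T : choiceType) (SB : SBAF T) (S : T -> Prop).

Definition sub_args (E F : Arg T -> Prop) : Prop := forall a, E a -> F a.

Definition RS_seed (E : Arg T -> Prop) : Prop :=
  [/\ forall a, E a -> a \in args SB, conflict_free SB E & sub_args E (RS SB S E)].

Lemma defends_mono (E F : Arg T -> Prop) a :
  sub_args E F -> defends SB E a -> defends SB F a.
Proof.
move=> EF Ea b Ab bAa; have [c [Ec cAb]] := Ea b Ab bAa.
by exists c; split=> //; apply: EF.
Qed.

Lemma RS_mono (E F : Arg T -> Prop) :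
  sub_args E F -> sub_args (RS SB S E) (RS SB S F).
Proof. by move=> EF a [Sa Ea]; split=> //; apply: defends_mono Ea. Qed.

Lemma RS_args (E : Arg T -> Prop) a : RS SB S E a -> a \in args SB.
Proof. by case=> [[]]. Qed.

Lemma RS_conflict_free (E : Arg T -> Prop) :
  (forall a, E a -> a \in args SB) -> conflict_free SB E ->
  conflict_free SB (RS SB S E).
Proof.
move=> EA Ecf a b [[Aa _] Ea] [_ Eb] aAb.
have [c [Ec cAa]] := Eb a Aa aAb.
have [d [Ed dAc]] := Ea c (EA c Ec) cAa.
exact: Ecf dAc.
Qed.

Lemma RS_seed_RS (E : Arg T -> Prop) : RS_seed E -> RS_seed (RS SB S E).
Proof.
by case=> EA Ecf Einc; split; [exact: RS_args | exact: RS_conflict_free | exact: RS_mono].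
Qed.

Lemma RS_seed_iter (E : Arg T -> Prop) i : RS_seed E -> RS_seed (RSi SB S i E).
Proof. by move=> seedE; elim: i => //= i; apply: RS_seed_RS. Qed.

Lemma RS_admissible (E : Arg T -> Prop) :
  conflict_free SB (RS SB S E) -> sub_args E (RS SB S E) ->
  admissible SB (RS SB S E).
Proof. by move=> cf Einc; split=> // a [_ Ea]; apply: defends_mono Ea. Qed.

Lemma Init_conflict_free : compatible SB S -> conflict_free SB (Init SB S).
Proof.
move=> compS a b [E [_ EI Ea]] [F [_ FI Fb]] aAb.
have [_ [Sa _]] := EI a Ea; have [_ [Sb nb]] := FI b Fb.
have Sca : S (Conc a) by apply: Sa; right.
case: aAb => [[s [bs s_ca]]|nb_ca]; last exact: nb _ nb_ca Sca.
exact: compS Sca (Sb s bs) s_ca.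
Qed.

Lemma Init_sub_RS : sub_args (Init SB S) (RS SB S (Init SB S)).
Proof.
move=> a [E [admE EI Ea]]; have [Aa [Sa na]] := EI a Ea.
split; first by split=> //; split=> // p pa; apply: Sa; left.
by apply: defends_mono (admE.2 a Ea) => x Ex; exists E.
Qed.

Lemma Init_seed : compatible SB S -> RS_seed (Init SB S).
Proof.
move=> compS; split; last exact: Init_sub_RS.
- by move=> a [E [_ EI Ea]]; case: (EI a Ea).
- exact: Init_conflict_free.
Qed.

End RSIteration.

Theorem mainTheorem6 (T : choiceType) (SB : SBAF T) (S : T -> Prop) :
  (forall t, S t -> SentA SB t) ->
  compatible SB S ->
  forall i : nat,
    (forall a, RSi SB S i (Init SB S) a -> RSi SB S i.+1 (Init SB S) a) /\
    admissible SB (RSi SB S i.+1 (Init SB S)).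
Proof.
move=> _ compS i.
have [_ _ incr] := RS_seed_iter i (Init_seed compS).
have [_ cf _] := RS_seed_iter i.+1 (Init_seed compS).
by split=> //; apply: RS_admissible.
Qed.
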